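(* Let $1\le k<n$. The map $F_k$, defined on $S\in\Theta(k,2n)$ by $F_k(S)=((\lambda^{(1)}_i+\lambda^{(2)}_i)_{1\le i\le k};t)$ with $t=1$ if $S$ is assigned $\uparrow$, $t=2$ if $S$ is assigned $\downarrow$, and $t=0$ otherwise, is an injection $\Theta(k,2n)\to\tilde P(n-k,n)$.
   Context: Root system $D_n$: positive roots $e_a\pm e_b$ ($a<b$); simple roots $e_i-e_{i+1}$ ($i<n$), $e_{n-1}+e_n$; order $\alpha\le\beta$ iff $\beta-\alpha$ is a nonnegative integer combination of simple roots. Base region: roots $e_a\pm e_b$ with $a\le k<b$; its $i$-th double-tailed diamond consists of $e_{k+1-i}\pm e_b$, $b>k$. Top region: $e_a+e_b$, $a<b\le k$. For a set $S$, $\lambda^{(1)}_i$ = number of roots of $S$ in the $i$-th double-tailed diamond, $\lambda^{(2)}_i$ = number of roots of $S$ of the form $e_a+e_{k+1-i}$ with $a<k+1-i$; if $\lambda^{(1)}_i=n-k$ for some $i$, $S$ is assigned $\uparrow$ if it contains $e_{k+1-i}-e_n$ and $\downarrow$ if it contains $e_{k+1-i}+e_n$ (for such $i$). $\Theta(k,2n)$ is the set of subsets $S$ of the union of the two regions meeting each region in a lower order ideal of that region and such that, for each top root $e_a+e_b$, $e_a+e_b\in S$ whenever $S$ contains more than $2n-2k$ roots of the diamonds indexed by $a$ and $b$ (diamonds $k+1-a$, $k+1-b$) combined, and $e_a+e_b\notin S$ whenever fewer. $\tilde P(n-k,n)$ is the set of pairs $(\gamma;t)$ with $\gamma=(\gamma_1\ge\dots\ge\gamma_k\ge0)$,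 $\gamma_1\le 2n-1-k$, $\gamma_i>\gamma_{i+1}$ whenever $\gamma_i>n-k$, and $t=0$ if no part of $\gamma$ equals $n-k$, $t\in\{1,2\}$ otherwise. *)

From mathcomp Require Import all_boot all_order all_algebra.
Set Implicit Arguments. Unset Strict Implicit. Unset Printing Implicit Defensive.
Import GRing.Theory Num.Theory.

(* A triple (x, y, s) : 'I_n * 'I_n * bool with x < y encodes
   the positive root e_a + e_b (s = true) or e_a - e_b (s = false), where
   a = x+1 and b = y+1 are the 1-based indices used in the paper. *)
Definition rootD (n : nat) := ('I_n * 'I_n * bool)%type.

Definition valid_root n (r : rootD n) : bool :=
  let: (x, y, _) := r in (x < y)%N.

(* standard basis vector e_i (1-based i) of Z^n *)
Definition ev n (i : nat) : 'I_n -> int := fun j => Posz ((j.+1 == i) : nat).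

Definition rvec n (r : rootD n) : 'I_n -> int :=
  let: (x, y, s) := r in
  fun j => (ev x.+1 j + (if s then 1 else -1) * ev y.+1 j)%R.

(* simple roots: e_i - e_{i+1} (1 <= i < n) indexed by j = i-1, and
   e_{n-1} + e_n indexed by j = n-1 *)
Definition simple n (l : 'I_n) : 'I_n -> int :=
  fun j => if (l.+1 < n)%N then (ev l.+1 j - ev l.+2 j)%R
           else (ev n.-1 j + ev n j)%R.

Definition root_le n (r1 r2 : rootD n) : Prop :=
  exists c : 'I_n -> nat, forall j : 'I_n,
    (rvec r2 j - rvec r1 j = \sum_(l < n) (Posz (c l)) * simple l j)%R.

Definition base_region n k (r : rootD n) : bool :=
  let: (x, y, _) := r in (x < y)%N && (x.+1 <= k < y.+1)%N.

Definition top_region n k (r : rootD n) : bool :=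
  let: (x, y, s) := r in [&& s, (x < y)%N & (y.+1 <= k)%N].

Definition lower_ideal_in n (R : pred (rootD n)) (S : {set rootD n}) : Prop :=
  forall r1 r2, R r1 -> R r2 -> root_le r1 r2 -> r2 \in S -> r1 \in S.

Definition diamond n k (i : nat) (r : rootD n) : bool :=
  let: (x, y, _) := r in (x.+1 == k.+1 - i)%N && (k < y.+1)%N.

Definition lambda1 n k (S : {set rootD n}) (i : nat) : nat :=
  #|[set r in S | diamond k i r]|.

Definition lambda2 n k (S : {set rootD n}) (i : nat) : nat :=
  #|[set r in S | let: (x, y, s) := r in
                  [&& s, (y.+1 == k.+1 - i)%N & (x < y)%N]]|.

Definition Theta n k (S : {set rootD n}) : Prop :=
  [/\ (forall r, r \in S -> base_region k r || top_region k r),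
      lower_ideal_in (base_region k) S,
      lower_ideal_in (top_region k) S &
      (forall x y : 'I_n, (x < y)%N -> (y.+1 <= k)%N ->
         let tot := (lambda1 k S (k.+1 - x.+1) + lambda1 k S (k.+1 - y.+1))%N in
         ((2 * n - 2 * k < tot)%N -> (x, y, true) \in S) /\
         ((tot < 2 * n - 2 * k)%N -> (x, y, true) \notin S))].

Definition has_end n k (S : {set rootD n}) (i : nat) (s : bool) : bool :=
  [exists r in S, let: (x, y, s') := r in
     [&& (x.+1 == k.+1 - i)%N, (y.+1 == n)%N & s' == s]].

Definition arrow_up n k (S : {set rootD n}) : bool :=
  [exists i : 'I_k, (lambda1 k S i.+1 == n - k)%N && has_end k S i.+1 false].

Definition arrow_down n k (S : {set rootD n}) : bool :=
  [exists i : 'I_k, (lambda1 k S i.+1 == n - k)%N && has_end k S i.+1 true].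

Definition tval n k (S : {set rootD n}) : nat :=
  if arrow_up k S then 1 else if arrow_down k S then 2 else 0.

(* F_k(S) = ((lambda1_i + lambda2_i)_{1<=i<=k}; t); gamma_i = nth 0 gamma (i-1) *)
Definition Fk n k (S : {set rootD n}) : seq nat * nat :=
  ([seq (lambda1 k S i + lambda2 k S i)%N | i <- iota 1 k], tval k S).

Definition Ptilde (m n : nat) (p : seq nat * nat) : Prop :=
  let: (g, t) := p in
  let k := (n - m)%N in
  [/\ size g = k,
      (forall i, (i.+1 < k)%N -> (nth 0 g i.+1 <= nth 0 g i)%N),
      (nth 0 g 0 <= 2 * n - 1 - k)%N,
      (forall i, (i.+1 < k)%N -> (m < nth 0 g i)%N -> (nth 0 g i.+1 < nth 0 g i)%N) &
      (if m \in g then (t == 1) || (t == 2) else t == 0)].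

(* Row a <= k of the base region, i.e. the roots e_a +- e_b with b > k, is the
   double-tailed diamond with index k+1-a.  Inside a row the order is the chain
     e_a - e_(k+1) < ... < e_a - e_(n-1) < e_a -+ e_n < e_a + e_(n-1) < ... < e_a + e_(k+1)
   in which only the two middle roots e_a - e_n and e_a + e_n are incomparable.
   Hence the part of S in row a is determined by its size D_a, except when
   D_a = n - k, where it contains exactly one middle root and the arrow says
   which.  Rows grow with a, so D is nondecreasing; the top roots e_c + e_a of S
   form a final segment c in [a - M_a, a), and the defining condition of Theta
   decides e_c + e_a by comparing D_c + D_a with 2(n - k).
   The part gamma_(k+1-a) is D_a + M_a.  It is monotone since D and M are, and
   it increases strictly above n - k because M_a = 0 when D_a < n - k, while
   D_a = D_(a+1) together with gamma_(k-a) > n - k puts e_a + e_(a+1) into S.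
   The value n - k occurs in gamma iff some D_a equals n - k (follow the top
   roots e_(a-1) + e_a down from such a row), i.e. iff there is an arrow.
   Conversely gamma determines the D_a by induction on a, since a larger D_a in
   one set gives it at least as large a column count M_a; then S is recovered
   row by row and column by column. *)

From Pilot Require Import Defs.
From mathcomp Require Import all_boot all_order all_algebra.
From mathcomp Require Import ring zify.
Set Implicit Arguments. Unset Strict Implicit. Unset Printing Implicit Defensive.
Import GRing.Theory.
Open Scope nat_scope.

Lemma sum_bool_le a b (P : pred nat) : \sum_(a <= i < b) P i <= b - a.
Proof.
rewrite -[b - a]muln1 -sum_nat_const_nat.
by apply: leq_sum => i _; apply: leq_b1.
Qed.

Lemma sum_bool_full a b (P : pred nat) :
  (forall i, a <= i < b -> P i) -> \sum_(a <= i < b) P i = b - a.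
Proof.
move=> hP; rewrite -[b - a]muln1 -sum_nat_const_nat.
by apply: eq_big_nat => i /hP ->.
Qed.

Lemma sum_bool_empty a b (P : pred nat) :
  (forall i, a <= i < b -> ~~ P i) -> \sum_(a <= i < b) P i = 0.
Proof. by move=> hP; rewrite big_nat_cond big1 // => i /andP[/hP/negbTE ->]. Qed.

Lemma sum_bool_mono a b (P Q : pred nat) :
  (forall i, a <= i < b -> P i -> Q i) ->
  \sum_(a <= i < b) P i <= \sum_(a <= i < b) Q i.
Proof.
move=> hPQ; rewrite big_nat_cond [X in _ <= X]big_nat_cond.
by apply: leq_sum => i /andP[hi _]; case Pi: (P i); rewrite // (hPQ i hi Pi).
Qed.

Lemma chain_upward (P : pred nat) a b :
  (forall i, a <= i < b -> P i -> P i.+1) ->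
  forall i j, a <= i <= j -> j <= b -> P i -> P j.
Proof.
move=> hP i j /andP[hai hij] hjb Pi; elim: j hij hjb => [|j IH].
  by rewrite leqn0 => /eqP <-.
rewrite leq_eqVlt => /orP[/eqP <- // | hij] hjb.
by apply: hP; [lia | apply: IH; lia].
Qed.

Lemma chain_downward (P : pred nat) a b :
  (forall i, a <= i < b -> P i.+1 -> P i) ->
  forall i j, a <= i <= j -> j <= b -> P j -> P i.
Proof.
move=> hP i j hij hjb; apply: contraLR; apply: (@chain_upward (predC P) a b) => //.
by move=> l hl; apply: contra; apply: hP.
Qed.

Lemma sum_prefix_closed a b (P : pred nat) :
  (forall i, a <= i -> i.+1 < b -> P i.+1 -> P i) ->
  forall j, a <= j < b -> P j = (j - a < \sum_(a <= i < b) P i).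
Proof.
move=> hP j /andP[haj hjb].
have hdown := @chain_downward P a b.-1 (fun i hi => hP i (proj1 (andP hi)) (ltac:(lia))).
rewrite (big_cat_nat haj (ltnW hjb)) /=; case Pj: (P j).
  rewrite (@sum_bool_full a j) => [|i hi]; last by apply: (hdown i j) => //; lia.
  by rewrite big_ltn // Pj; lia.
rewrite (@sum_bool_empty j b) => [|i hi].
  by rewrite addn0 ltnNge sum_bool_le.
by apply: contraFN Pj; apply: hdown; lia.
Qed.

Lemma sum_suffix_closed a b (P : pred nat) :
  (forall i, a <= i -> i.+1 < b -> P i -> P i.+1) ->
  forall j, a <= j < b -> P j = (b - j <= \sum_(a <= i < b) P i).
Proof.
move=> hP j /andP[haj hjb].
have hup := @chain_upward P a b.-1 (fun i hi => hP i (proj1 (andP hi)) (ltac:(lia))).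
rewrite (big_cat_nat haj (ltnW hjb)) /=; case Pj: (P j).
  rewrite (@sum_bool_full j b) => [|i hi]; last by apply: (hup j i) => //; lia.
  by rewrite leq_addl.
rewrite (@sum_bool_empty a j) => [|i hi]; last by apply: contraFN Pj; apply: hup; lia.
rewrite add0n big_ltn // Pj add0n.
by have := @sum_bool_le j.+1 b P; lia.
Qed.

Lemma card_rootD n (P : pred (rootD n)) :
  #|[set r | P r]| = \sum_(x < n) \sum_(y < n) (P (x, y, true) + P (x, y, false)).
Proof.
rewrite -sum1_card big_mkcond /= pair_big /=.
under [RHS]eq_bigr => xy _ do
  rewrite -(@big_bool _ 0 addn (fun s => nat_of_bool (P (xy.1, xy.2, s)))).
rewrite pair_big /=; apply: eq_bigr => -[[x y] s] _.
by rewrite inE.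
Qed.

Definition mkroot n (x y : nat) (s : bool) : rootD n.+1 := (inord x, inord y, s).

Definition has_root n (S : {set rootD n.+1}) x y s := mkroot n x y s \in S.

Lemma has_root_val n (S : {set rootD n.+1}) (x y : 'I_n.+1) s :
  has_root S x y s = ((x, y, s) \in S).
Proof. by rewrite /has_root /mkroot !inord_val. Qed.

Definition diamond_card n k (S : {set rootD n.+1}) x :=
  \sum_(k <= y < n.+1) (has_root S x y true + has_root S x y false).

Definition column_card n (S : {set rootD n.+1}) y :=
  \sum_(0 <= x < y) has_root S x y true.

Lemma lambda1E n k (S : {set rootD n.+1}) i :
  i <= k <= n -> lambda1 k S i = diamond_card k S (k - i).
Proof.
move=> /andP[hik hkn]; rewrite /lambda1 card_rootD.
transitivity (\sum_(x < n.+1 | x == k - i :> nat) \sum_(y < n.+1 | k <= y)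
                (has_root S x y true + has_root S x y false)).
  rewrite [RHS]big_mkcond; apply: eq_bigr => x _.
  case: (eqVneq (x : nat) (k - i)) => hx; last first.
    by rewrite big1 // => y _; rewrite /= subSn // eqSS (negbTE hx) /= !andbF.
  rewrite [RHS]big_mkcond; apply: eq_bigr => y _.
  rewrite /= !has_root_val subSn // eqSS hx eqxx ltnS.
  by case: (k <= y); rewrite ?andbF ?andbT.
rewrite (big_ord1_eq _ (fun x => \sum_(y < n.+1 | k <= y)
                            (has_root S x y true + has_root S x y false))).
by rewrite ifT ?ltnS ?(leq_trans (leq_subr _ _)) // /diamond_card big_geq_mkord.
Qed.

Lemma lambda2E n k (S : {set rootD n.+1}) i :
  i <= k <= n -> lambda2 k S i = column_card S (k - i).
Proof.
move=> /andP[hik hkn]; rewrite /lambda2 card_rootD exchange_big /=.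
transitivity (\sum_(y < n.+1 | y == k - i :> nat) \sum_(x < n.+1 | x < y)
                has_root S x y true).
  rewrite [RHS]big_mkcond; apply: eq_bigr => y _.
  case: (eqVneq (y : nat) (k - i)) => hy; last first.
    by rewrite big1 // => x _; rewrite /= subSn // eqSS (negbTE hy) /= !andbF.
  rewrite [RHS]big_mkcond; apply: eq_bigr => x _.
  rewrite /= !has_root_val subSn // eqSS hy eqxx andbF addn0.
  by case: (x < k - i); rewrite ?andbF ?andbT.
rewrite (big_ord1_eq _ (fun y => \sum_(x < n.+1 | x < y) has_root S x y true)).
rewrite ifT ?ltnS ?(leq_trans (leq_subr _ _)) // /column_card.
rewrite (big_nat_widen 0 (k - i) n.+1) ?big_mkord //.
by rewrite ltnW // ltnS (leq_trans (leq_subr _ _)).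
Qed.

Lemma root_le_simple n (r1 r2 : rootD n) (l : 'I_n) :
  (forall j, (rvec r2 j - rvec r1 j = simple l j)%R) -> root_le r1 r2.
Proof.
move=> H; exists (fun l' => (l' == l : nat)) => j.
rewrite H (bigD1 l) //= eqxx big1 ?addr0 ?mul1r // => l' /negbTE ->.
by rewrite mul0r.
Qed.

Lemma rvec_mkroot n x y s (j : 'I_n.+1) : x <= n -> y <= n ->
  rvec (mkroot n x y s) j =
    (Posz (j == x :> nat) + (if s then 1 else -1) * Posz (j == y :> nat))%R.
Proof. by move=> hx hy; rewrite /rvec /mkroot /ev !inordK. Qed.

Lemma simple_inord n l (j : 'I_n.+1) : l < n ->
  simple (inord l : 'I_n.+1) j = (Posz (j == l :> nat) - Posz (j == l.+1 :> nat))%R.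
Proof. by move=> hl; rewrite /simple /ev inordK ?ltnS ?hl // ltnW. Qed.

Lemma simple_last n (j : 'I_n.+2) :
  simple (inord n.+1 : 'I_n.+2) j = (Posz (j == n :> nat) + Posz (j == n.+1 :> nat))%R.
Proof. by rewrite /simple /ev inordK // ltnn. Qed.

Lemma root_le_succ_first n x y s : x < n -> y <= n ->
  root_le (mkroot n x.+1 y s) (mkroot n x y s).
Proof.
move=> hx hy; apply: (@root_le_simple _ _ _ (inord x)) => j.
by rewrite !rvec_mkroot ?simple_inord // ?(ltnW hx); ring.
Qed.

Lemma root_le_plus_succ n x y : x <= n -> y < n ->
  root_le (mkroot n x y.+1 true) (mkroot n x y true).
Proof.
move=> hx hy; apply: (@root_le_simple _ _ _ (inord y)) => j.
by rewrite !rvec_mkroot ?simple_inord // ?(ltnW hy); ring.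
Qed.

Lemma root_le_minus_succ n x y : x <= n -> y < n ->
  root_le (mkroot n x y false) (mkroot n x y.+1 false).
Proof.
move=> hx hy; apply: (@root_le_simple _ _ _ (inord y)) => j.
by rewrite !rvec_mkroot ?simple_inord // ?(ltnW hy); ring.
Qed.

Lemma root_le_minus_plus_last n x : x <= n.+1 ->
  root_le (mkroot n.+1 x n false) (mkroot n.+1 x n.+1 true).
Proof.
move=> hx; apply: (@root_le_simple _ _ _ (inord n.+1)) => j.
by rewrite !rvec_mkroot ?simple_last //; ring.
Qed.

Lemma root_le_minus_last_plus n x : x <= n.+1 ->
  root_le (mkroot n.+1 x n.+1 false) (mkroot n.+1 x n true).
Proof.
move=> hx; apply: (@root_le_simple _ _ _ (inord n.+1)) => j.
by rewrite !rvec_mkroot ?simple_last //; ring.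
Qed.

Lemma base_region_mkroot n k x y s : x <= n -> y <= n ->
  base_region k (mkroot n x y s) = (x < y) && (x < k <= y).
Proof. by move=> hx hy; rewrite /base_region /mkroot !inordK. Qed.

Lemma top_region_mkroot n k x y s : x <= n -> y <= n ->
  top_region k (mkroot n x y s) = [&& s, x < y & y < k].
Proof. by move=> hx hy; rewrite /top_region /mkroot !inordK. Qed.

(* Coordinates are 0-based, so row x is the paper's row x+1 and its diamond has
   index k - x; the rank is written n.+2 to make n.+1 the last coordinate. *)
Section Diamonds.
Variables (n k : nat) (S : {set rootD n.+2}).
Hypotheses (hkn : k <= n.+1) (HS : Theta k S).

Local Notation D := (diamond_card k S).
Local Notation M := (column_card S).
Local Notation m := (n.+2 - k).
Local Notation minus_card x := (\sum_(k <= y < n.+1) has_root S x y false).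
Local Notation plus_card x := (\sum_(k <= y < n.+1) has_root S x y true).

Lemma has_base_root_le x y s x' y' s' :
  x < k <= y -> x' < k <= y' -> y <= n.+1 -> y' <= n.+1 ->
  root_le (mkroot n.+1 x' y' s') (mkroot n.+1 x y s) ->
  has_root S x y s -> has_root S x' y' s'.
Proof.
move=> hxy hxy' hy hy'; case: HS => _ base_ideal _ _; apply: base_ideal.
  by rewrite base_region_mkroot //; lia.
by rewrite base_region_mkroot //; lia.
Qed.

Lemma has_top_root_le x y x' y' :
  x < y < k -> x' < y' < k ->
  root_le (mkroot n.+1 x' y' true) (mkroot n.+1 x y true) ->
  has_root S x y true -> has_root S x' y' true.
Proof.
move=> hxy hxy'; case: HS => _ _ top_ideal _; apply: top_ideal.
  by rewrite top_region_mkroot //=; lia.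
by rewrite top_region_mkroot //=; lia.
Qed.

Lemma has_base_root_first x x' y s : x <= x' < k -> k <= y <= n.+1 ->
  has_root S x y s -> has_root S x' y s.
Proof.
move=> hx hy; apply: (@chain_upward (fun x => has_root S x y s) 0 k.-1); try lia.
move=> i hi; apply: has_base_root_le; try lia.
by apply: root_le_succ_first; lia.
Qed.

Lemma has_minus_root x y y' : x < k -> k <= y' <= y -> y <= n.+1 ->
  has_root S x y false -> has_root S x y' false.
Proof.
move=> hx hy hyn; apply: (@chain_downward (fun y => has_root S x y false) k n.+1) => //.
move=> i hi; apply: has_base_root_le; try lia.
by apply: root_le_minus_succ; lia.
Qed.

Lemma has_plus_root x y y' : x < k -> k <= y <= y' -> y' <= n.+1 ->
  has_root S x y true -> has_root S x y' true.
Proof.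
move=> hx hy hyn; apply: (@chain_upward (fun y => has_root S x y true) k n.+1) => //.
move=> i hi; apply: has_base_root_le; try lia.
by apply: root_le_plus_succ; lia.
Qed.

Lemma has_top_root_first x x' y : x <= x' < y -> y < k ->
  has_root S x y true -> has_root S x' y true.
Proof.
move=> hx hy; apply: (@chain_upward (fun x => has_root S x y true) 0 y.-1); try lia.
move=> i hi; apply: has_top_root_le; try lia.
by apply: root_le_succ_first; lia.
Qed.

Lemma has_top_root_second x y : x < y -> y.+1 < k ->
  has_root S x y true -> has_root S x y.+1 true.
Proof.
move=> hx hy; apply: has_top_root_le; try lia.
by apply: root_le_plus_succ; lia.
Qed.

Lemma has_minus_of_end x y : x < k -> k <= y <= n ->
  has_root S x n.+1 false || has_root S x n.+1 true -> has_root S x y false.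
Proof.
move=> hx hy /orP[hm | hp]; first by apply: (has_minus_root (y := n.+1)) => //; lia.
apply: (has_minus_root (y := n)); try lia.
apply: (has_base_root_le _ _ _ _ _ hp); try lia.
by apply: root_le_minus_plus_last; lia.
Qed.

Lemma has_ends_of_plus x y : x < k -> k <= y <= n ->
  has_root S x y true -> has_root S x n.+1 false && has_root S x n.+1 true.
Proof.
move=> hx hy hp; apply/andP; split.
  apply: (has_base_root_le (x := x) (y := n) (s := true)); try lia.
    by apply: root_le_minus_last_plus; lia.
  by apply: (has_plus_root (y := y)); try lia.
by apply: (has_plus_root (y := y)); try lia.
Qed.

Lemma diamond_card_split x : D x =
  minus_card x + plus_card x + (has_root S x n.+1 false + has_root S x n.+1 true).
Proof. by rewrite /diamond_card big_nat_recr //= big_split /=; lia. Qed.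

Lemma minus_card_prefix x y : x < k -> k <= y <= n ->
  has_root S x y false = (y - k < minus_card x).
Proof.
move=> hx hy; apply: sum_prefix_closed; last lia.
by move=> i hi hin; apply: (has_minus_root (y := i.+1)); lia.
Qed.

Lemma plus_card_suffix x y : x < k -> k <= y <= n ->
  has_root S x y true = (n.+1 - y <= plus_card x).
Proof.
move=> hx hy; apply: sum_suffix_closed; last lia.
by move=> i hi hin; apply: (has_plus_root (y := i)); lia.
Qed.

Lemma minus_card_of_end x : x < k ->
  has_root S x n.+1 false || has_root S x n.+1 true -> minus_card x = n.+1 - k.
Proof. by move=> hx he; apply: sum_bool_full => i hi; apply: has_minus_of_end. Qed.

Lemma plus_card_of_ends x : x < k ->
  ~~ (has_root S x n.+1 false && has_root S x n.+1 true) -> plus_card x = 0.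
Proof.
move=> hx he; apply: sum_bool_empty => i hi.
by apply: contra he; apply: has_ends_of_plus.
Qed.

Lemma diamond_card_le x : D x <= 2 * m.
Proof.
rewrite diamond_card_split; have := sum_bool_le k n.+1 (fun y => has_root S x y false).
have := sum_bool_le k n.+1 (fun y => has_root S x y true).
by case: (has_root S x n.+1 false); case: (has_root S x n.+1 true) => /=; lia.
Qed.

Lemma diamond_minus x y : x < k -> k <= y <= n ->
  has_root S x y false = (y - k < D x).
Proof.
move=> hx hy; have := minus_card_prefix hx hy; rewrite diamond_card_split.
case hm: (has_root S x y false); first lia.
have hend : has_root S x n.+1 false || has_root S x n.+1 true = false.
  by apply: contraFF hm; apply: has_minus_of_end.
move: hend => /norP[/negbTE he1 /negbTE he2].
by rewrite plus_card_of_ends ?he1 ?he2 //; lia.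
Qed.

(* The roots of row x up to e_x + e_y are the m minus roots, e_x + e_(n+1) and
   the plus roots e_x + e_y' with y <= y' <= n: m + (n.+2 - y) of them. *)
Lemma diamond_plus x y : x < k -> k <= y <= n ->
  has_root S x y true = (m + (n.+2 - y) <= D x).
Proof.
move=> hx hy; have := plus_card_suffix hx hy; rewrite diamond_card_split.
case hp: (has_root S x y true).
  have /andP[he1 he2] := has_ends_of_plus hx hy hp.
  by rewrite minus_card_of_end ?he1 // he2 /=; lia.
have := sum_bool_le k n.+1 (fun y => has_root S x y false).
by case: (has_root S x n.+1 false); case: (has_root S x n.+1 true) => /=; lia.
Qed.

Lemma diamond_end_some x : x < k ->
  (has_root S x n.+1 false || has_root S x n.+1 true) = (m <= D x).
Proof.
move=> hx; rewrite diamond_card_split.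
have := sum_bool_le k n.+1 (fun y => has_root S x y false).
case: (boolP (_ || _)) => he.
  rewrite minus_card_of_end //; move: he.
  by case: (has_root S x n.+1 false); case: (has_root S x n.+1 true) => /=; lia.
rewrite plus_card_of_ends //; last by apply: contra he => /andP[->].
by move/norP: he => [/negbTE -> /negbTE ->]; lia.
Qed.

Lemma diamond_end_both x : x < k ->
  (has_root S x n.+1 false && has_root S x n.+1 true) = (m < D x).
Proof.
move=> hx; rewrite diamond_card_split.
have := sum_bool_le k n.+1 (fun y => has_root S x y false).
case: (boolP (_ && _)) => he.
  case/andP: he => he1 he2.
  by rewrite minus_card_of_end ?he1 // he2 /=; lia.
rewrite plus_card_of_ends //; move: he.
by case: (has_root S x n.+1 false); case: (has_root S x n.+1 true) => /=; lia.
Qed.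

Local Notation G z := (D z + M z).

Lemma top_root_of_diamonds x y : x < y < k -> 2 * m < D x + D y -> has_root S x y true.
Proof.
move=> hxy; case: HS => _ _ _ /(_ (inord x) (inord y)).
rewrite !inordK ?subSS ?lambda1E ?subKn ?mulnBr; try lia.
by move=> /(_ ltac:(lia) ltac:(lia)) [+ _]; apply.
Qed.

Lemma diamonds_of_top_root x y : x < y < k -> has_root S x y true -> 2 * m <= D x + D y.
Proof.
move=> hxy; case: HS => _ _ _ /(_ (inord x) (inord y)).
rewrite !inordK ?subSS ?lambda1E ?subKn ?mulnBr; try lia.
move=> /(_ ltac:(lia) ltac:(lia)) [_ hlt] hxyS.
by rewrite leqNgt; apply/negP => /hlt /negP[]; exact: hxyS.
Qed.

Lemma diamond_card_mono x x' : x <= x' < k -> D x <= D x'.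
Proof.
move=> hx; rewrite /diamond_card big_nat_cond [X in _ <= X]big_nat_cond.
apply: leq_sum => y /andP[hy _]; apply: leq_add.
  by case h: (has_root S x y true); rewrite // (has_base_root_first (x := x)) //; lia.
by case h: (has_root S x y false); rewrite // (has_base_root_first (x := x)) //; lia.
Qed.

Lemma column_card_le y : M y <= y.
Proof. by have := sum_bool_le 0 y (fun x => has_root S x y true); rewrite subn0. Qed.

Lemma column_card_succ y : y.+1 < k -> M y + has_root S y y.+1 true <= M y.+1.
Proof.
move=> hy; rewrite /column_card big_nat_recr //= leq_add2r.
by apply: sum_bool_mono => x hx; apply: has_top_root_second; lia.
Qed.

Lemma has_top_root_column x y : x < y < k -> has_root S x y true = (y - x <= M y).
Proof.
move=> hxy; apply: sum_suffix_closed; last lia.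
by move=> i _ hi; apply: (has_top_root_first (x := i)); lia.
Qed.

Lemma column_card_eq0 x : x < k -> D x < m -> M x = 0.
Proof.
move=> hx hD; apply: sum_bool_empty => x' hx'; apply/negP => hS.
have := diamonds_of_top_root (ltac:(lia) : x' < x < k) hS.
by have := diamond_card_mono (ltac:(lia) : x' <= x < k); lia.
Qed.

Lemma has_top_root_of_column y : y.+1 < k -> 0 < M y.+1 -> has_root S y y.+1 true.
Proof. by move=> hy hM; rewrite has_top_root_column ?subSn ?subnn //; lia. Qed.

Lemma gamma_mono z : z.+1 < k -> G z <= G z.+1.
Proof.
move=> hz; apply: leq_add; first by apply: diamond_card_mono; lia.
by have := column_card_succ hz; lia.
Qed.

Lemma gamma_bound : 0 < k -> G k.-1 <= 2 * n.+2 - 1 - k.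
Proof. by move=> hk; have := diamond_card_le k.-1; have := column_card_le k.-1; lia. Qed.

Lemma gamma_strict z : z.+1 < k -> m < G z.+1 -> G z < G z.+1.
Proof.
move=> hz hG; have := column_card_succ hz.
have := diamond_card_mono (ltac:(lia) : z <= z.+1 < k).
case: (ltngtP (D z) (D z.+1)) => hDz; [lia | lia | move=> _].
case: (ltngtP (D z.+1) m) => hm.
- by have := column_card_eq0 (ltac:(lia) : z.+1 < k) hm; lia.
- by rewrite top_root_of_diamonds //=; lia.
- by rewrite has_top_root_of_column //; lia.
Qed.

Lemma diamond_of_gamma z : z < k -> G z = m -> D z = m.
Proof.
move=> hz hG; case: (ltngtP (D z) m) => hm //; last lia.
by have := column_card_eq0 hz hm; lia.
Qed.

Lemma gamma_of_diamond z : z < k -> D z = m -> exists2 z', z' < k & G z' = m.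
Proof.
elim/ltn_ind: z => z IH hz hD.
case: (posnP (M z)) => hMz; first by exists z; rewrite // hMz hD addn0.
case: z IH hz hD hMz => [|z] IH hz hD hMz; first by have := column_card_le 0; lia.
have hS := has_top_root_of_column hz hMz.
apply: (IH z); try lia.
have := diamonds_of_top_root (ltac:(lia) : z < z.+1 < k) hS.
by have := diamond_card_mono (ltac:(lia) : z <= z.+1 < k); lia.
Qed.

Lemma nth_gamma j : j < k -> nth 0 (Fk k S).1 j = G (k - j.+1).
Proof.
move=> hj; rewrite (nth_map 0) ?size_iota // nth_iota // add1n.
by rewrite lambda1E ?lambda2E //; lia.
Qed.

Lemma mem_gamma : m \in (Fk k S).1 <-> exists2 x, x < k & D x = m.
Proof.
split=> [/mapP[i] | [x hx hD]].
  rewrite mem_iota => hi hm; exists (k - i); first lia.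
  by apply: diamond_of_gamma; rewrite -?lambda1E -?lambda2E; lia.
have [z hz hG] := gamma_of_diamond hx hD.
by apply/mapP; exists (k - z); rewrite ?mem_iota ?lambda1E ?lambda2E ?subKn; lia.
Qed.

Lemma has_endE i s : i <= k -> has_end k S i s = has_root S (k - i) n.+1 s.
Proof.
move=> hi; apply/existsP/idP => [[[[x y] s'] /andP[hS /and3P[hx hy /eqP <-]]] | hS].
  rewrite /has_root /mkroot.
  have <- : x = inord (k - i) by apply: val_inj; rewrite /= inordK; lia.
  by have <- : y = inord n.+1 by apply: val_inj; rewrite /= inordK //; lia.
exists (mkroot n.+1 (k - i) n.+1 s); apply/andP; split; first exact: hS.
by rewrite /= !inordK ?eqxx ?andbT //; lia.
Qed.

Lemma arrowP s :
  [exists i : 'I_k, (lambda1 k S i.+1 == n.+2 - k) && has_end k S i.+1 s] <->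
  exists2 x, x < k & D x = m /\ has_root S x n.+1 s.
Proof.
split=> [/existsP[i /andP[/eqP hl he]] | [x hx [hD hS]]].
  have hi := ltn_ord i; exists (k - i.+1); first lia.
  rewrite lambda1E in hl; last lia.
  by rewrite has_endE in he; last lia.
apply/existsP; exists (Ordinal (ltac:(lia) : k - x.+1 < k)).
by rewrite /= subnSK // lambda1E ?has_endE ?subKn ?hD ?hS ?eqxx //; lia.
Qed.

Lemma tval_gt0 : 0 < Defs.tval k S <-> exists2 x, x < k & D x = m.
Proof.
rewrite /Defs.tval; split.
  case: ifP => [/(arrowP false)[x hx []] | _]; first by exists x.
  by case: ifP => [/(arrowP true)[x hx []] | _]; first by exists x.
move=> [x hx hD]; have := diamond_end_some hx; rewrite hD leqnn.
case/orP=> hS; first by rewrite ifT //; apply/(arrowP false); exists x.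
by case: ifP => // _; rewrite ifT //; apply/(arrowP true); exists x.
Qed.

Lemma Ptilde_Fk : 0 < k -> Ptilde m n.+2 (Fk k S).
Proof.
move=> hk; rewrite /Ptilde /Fk subKn; last lia.
have tval12 : (Defs.tval k S == 1) || (Defs.tval k S == 2) = (0 < Defs.tval k S).
  by rewrite /Defs.tval; case: (arrow_up k S); case: (arrow_down k S).
split.
- by rewrite size_map size_iota.
- move=> i hi; rewrite !nth_gamma; try lia.
  by have := gamma_mono (ltac:(lia) : (k - i.+2).+1 < k); rewrite subnSK.
- by rewrite nth_gamma // subn1 gamma_bound.
- move=> i hi; rewrite !nth_gamma; try lia.
  by have := gamma_strict (ltac:(lia) : (k - i.+2).+1 < k); rewrite subnSK.
case: ifP => hm; first by rewrite tval12; apply/tval_gt0/mem_gamma.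
by rewrite eqn0Ngt; apply/negP => /tval_gt0/mem_gamma; rewrite hm.
Qed.

End Diamonds.

Section TwoSets.
Variables (n k : nat) (S1 S2 : {set rootD n.+2}).
Hypotheses (hkn : k <= n.+1) (HS1 : Theta k S1) (HS2 : Theta k S2).

Local Notation m := (n.+2 - k).
Local Notation D1 := (diamond_card k S1).
Local Notation D2 := (diamond_card k S2).

Lemma column_card_le_of_diamond z : z < k ->
  (forall x, x < z -> D1 x = D2 x) -> D1 z < D2 z -> column_card S1 z <= column_card S2 z.
Proof.
move=> hz hD hlt; apply: sum_bool_mono => x hx hS1.
apply: (top_root_of_diamonds hkn HS2); first lia.
have := diamonds_of_top_root hkn HS1 (ltac:(lia) : x < z < k) hS1.
by rewrite hD //; lia.
Qed.

(* The arrow of S2 sits at a row x' with D2 x' = m.  Rows are nested, so for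
   x' <= x the root e_x' - e_last climbs to row x, while for x < x' the other
   middle root of row x would climb to row x', which would then have both. *)
Lemma has_minus_end_of_tval x : x < k -> D1 x = m -> D2 x = m ->
  Defs.tval k S1 = Defs.tval k S2 ->
  has_root S1 x n.+1 false -> has_root S2 x n.+1 false.
Proof.
move=> hx hD1 hD2 ht hS1.
have up1 : arrow_up k S1 by apply/(arrowP S1 hkn false); exists x.
have /(arrowP S2 hkn false)[x' hx' [hD' hS2']] : arrow_up k S2.
  by move: ht; rewrite /Defs.tval up1; case: (arrow_up k S2); case: (arrow_down k S2).
case: (leqP x' x) => hxx; first by apply: (has_base_root_first hkn HS2 (x := x')); lia.
case hS2 : (has_root S2 x n.+1 false) => //.
have := diamond_end_some hkn HS2 hx; rewrite hD2 leqnn hS2 /=.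
move=> /(has_base_root_first hkn HS2 (x' := x')) hS2p.
by have := diamond_end_both hkn HS2 hx'; rewrite hS2' hS2p; lia.
Qed.

End TwoSets.

Lemma minus_end_eq n k (S1 S2 : {set rootD n.+2}) x :
  k <= n.+1 -> Theta k S1 -> Theta k S2 -> x < k ->
  diamond_card k S1 x = diamond_card k S2 x -> Defs.tval k S1 = Defs.tval k S2 ->
  has_root S1 x n.+1 false = has_root S2 x n.+1 false.
Proof.
move=> hkn HS1 HS2 hx hD ht.
have some1 := diamond_end_some hkn HS1 hx; have some2 := diamond_end_some hkn HS2 hx.
have both1 := diamond_end_both hkn HS1 hx; have both2 := diamond_end_both hkn HS2 hx.
rewrite -hD in some2 both2; case: (ltngtP (diamond_card k S1 x) (n.+2 - k)) => hm.
- by move: some1 some2; rewrite leqNgt hm => /norP[/negbTE -> _] /norP[/negbTE -> _].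
- by move: both1 both2; rewrite hm => /andP[-> _] /andP[-> _].
have hm2 : diamond_card k S2 x = n.+2 - k by rewrite -hD.
apply/idP/idP; first exact: (has_minus_end_of_tval hkn HS2 hx hm hm2 ht).
exact: (has_minus_end_of_tval hkn HS1 hx hm2 hm (esym ht)).
Qed.

Lemma plus_end_eq n k (S1 S2 : {set rootD n.+2}) x :
  k <= n.+1 -> Theta k S1 -> Theta k S2 -> x < k ->
  diamond_card k S1 x = diamond_card k S2 x ->
  has_root S1 x n.+1 false = has_root S2 x n.+1 false ->
  has_root S1 x n.+1 true = has_root S2 x n.+1 true.
Proof.
move=> hkn HS1 HS2 hx hD hmin.
have some1 := diamond_end_some hkn HS1 hx; have some2 := diamond_end_some hkn HS2 hx.
have both1 := diamond_end_both hkn HS1 hx; have both2 := diamond_end_both hkn HS2 hx.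
rewrite -hD -hmin in some2 both2; move: some1 some2 both1 both2.
by case: (has_root S1 x n.+1 false) => /= [_ _ -> -> | -> -> _ _].
Qed.

Lemma has_base_root_eq n k (S1 S2 : {set rootD n.+2}) x y s :
  k <= n.+1 -> Theta k S1 -> Theta k S2 -> x < k -> k <= y <= n.+1 ->
  diamond_card k S1 x = diamond_card k S2 x -> Defs.tval k S1 = Defs.tval k S2 ->
  has_root S1 x y s = has_root S2 x y s.
Proof.
move=> hkn HS1 HS2 hx hy hD ht; case: (ltnP y n.+1) => hyn.
  have hy' : k <= y <= n by lia.
  by case: s; rewrite ?(diamond_plus hkn HS1 hx hy') ?(diamond_plus hkn HS2 hx hy')
    ?(diamond_minus hkn HS1 hx hy') ?(diamond_minus hkn HS2 hx hy') hD.
have -> : y = n.+1 by lia.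
have hmin := minus_end_eq hkn HS1 HS2 hx hD ht.
by case: s => //; exact: (plus_end_eq hkn HS1 HS2 hx hD hmin).
Qed.

Lemma gamma_eq_of_Fk n k (S1 S2 : {set rootD n.+2}) z :
  k <= n.+1 -> Fk k S1 = Fk k S2 -> z < k ->
  diamond_card k S1 z + column_card S1 z = diamond_card k S2 z + column_card S2 z.
Proof.
move=> hkn [hg _] hz; have := congr1 (nth 0 ^~ (k - z.+1)) hg.
by rewrite /= !nth_gamma ?subnSK ?subKn //; lia.
Qed.

Lemma diamond_card_eq_of_Fk n k (S1 S2 : {set rootD n.+2}) z :
  k <= n.+1 -> Theta k S1 -> Theta k S2 -> Fk k S1 = Fk k S2 -> z < k ->
  diamond_card k S1 z = diamond_card k S2 z.
Proof.
move=> hkn HS1 HS2 hF; elim/ltn_ind: z => z IH hz.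
have hG := gamma_eq_of_Fk hkn hF hz.
have hlt x : x < z -> diamond_card k S1 x = diamond_card k S2 x by move=> hx; apply: IH; lia.
case: (ltngtP (diamond_card k S1 z) (diamond_card k S2 z)) => // hD.
  by have := column_card_le_of_diamond hkn HS1 HS2 hz hlt hD; lia.
have := column_card_le_of_diamond hkn HS2 HS1 hz (fun x hx => esym (hlt x hx)) hD; lia.
Qed.

Lemma Fk_inj n k (S1 S2 : {set rootD n.+2}) :
  k <= n.+1 -> Theta k S1 -> Theta k S2 -> Fk k S1 = Fk k S2 -> S1 = S2.
Proof.
move=> hkn HS1 HS2 hF; have hD := diamond_card_eq_of_Fk hkn HS1 HS2 hF.
apply/setP => r; case: (HS1) (HS2) => [H1 _ _ _] [H2 _ _ _].
have [hr | hr] := boolP (base_region k r || top_region k r); last first.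
  by rewrite (contraNF (H1 r) hr) (contraNF (H2 r) hr).
case: r hr => -[x y] s; rewrite -!has_root_val.
case/orP => [/andP[hxy /andP[hxk hky]] | /and3P[/= -> hxy hyk]].
  have hy := ltn_ord y; apply: (has_base_root_eq s hkn HS1 HS2); try lia.
    by apply: hD.
  by case: hF.
rewrite (has_top_root_column hkn HS1) ?(has_top_root_column hkn HS2) ?hxy //.
by have := gamma_eq_of_Fk hkn hF hyk; rewrite hD //; lia.
Qed.

Theorem lemma3p16 (n k : nat) (hk1 : (1 <= k)%N) (hkn : (k < n)%N) :
  (forall S : {set rootD n}, Theta k S -> Ptilde (n - k) n (Fk k S)) /\
  (forall S1 S2 : {set rootD n}, Theta k S1 -> Theta k S2 ->
     Fk k S1 = Fk k S2 -> S1 = S2).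
Proof.
case: n hkn => [|[|n]] hkn; try lia.
split=> [S HS | S1 S2 HS1 HS2]; first exact: Ptilde_Fk.
exact: Fk_inj.
Qed.
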